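(* Let $(X,d)$ be a nonempty compact and rectifiably path-connected metric space and let $F:(X,d)\rightarrow (K(X),H)$ be a set-valued pointwise contraction. Then $F:(X,d_r)\rightarrow(K(X),H_r)$ is shrinking, i.e., $H_r(F(x),F(y))<d_r(x,y)$ for all $x,y\in X$ with $x\neq y$.
   Context: The length of a continuous path $p:[0,1]\to X$ is $l(p)=\sup\sum_{i=1}^n d(p(t_{i-1}),p(t_i))$ over finite partitions $0=t_0<\cdots<t_n=1$; $X$ is rectifiably path-connected if every two points are joined by a continuous path of finite length. $d_r(x,y)=\inf\{l(p):p$ a rectifiable path from $x$ to $y\}$. $K(X)$ is the set of nonempty compact subsets of $X$; $H$ and $H_r$ are the Hausdorff distances associated with $d$ and $d_r$ respectively, where for a metric $\rho$, $H_\rho(A,B)=\max\{\sup_{a\in A}\inf_{b\in B}\rho(a,b),\sup_{b\in B}\inf_{a\in A}\rho(a,b)\}$. $F$ is a set-valued pointwise contraction if for every $x\in X$ there exist $\beta_x\in[0,1)$ and an open neighborhood $N(x)$ with $H(F(x),F(y))\le\beta_x d(x,y)$ for all $y\in N(x)$. *)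

From Stdlib Require Import Reals.
From Coquelicot Require Import Coquelicot.
Open Scope R_scope.

Section MetricDefs.
Context {X : Type} (d : X -> X -> R).

Definition is_metric : Prop :=
  (forall x y, 0 <= d x y) /\
  (forall x y, d x y = 0 <-> x = y) /\
  (forall x y, d x y = d y x) /\
  (forall x y z, d x z <= d x y + d y z).

Definition d_open (U : X -> Prop) : Prop :=
  forall z, U z -> exists e, 0 < e /\ forall w, d z w < e -> U w.

Definition d_compact (A : X -> Prop) : Prop :=
  forall (I : Type) (U : I -> X -> Prop),
    (forall i, d_open (U i)) ->
    (forall x, A x -> exists i, U i x) ->
    exists l : list I, forall x, A x -> exists i, List.In i l /\ U i x.

Definition in_KX (A : X -> Prop) : Prop := (exists a, A a) /\ d_compact A.

(* continuous path p : [0,1] -> X from x to y (values outside [0,1] ignored) *)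
Definition is_path (p : R -> X) (x y : X) : Prop :=
  p 0 = x /\ p 1 = y /\
  forall t, 0 <= t <= 1 -> forall eps, 0 < eps ->
    exists delta, 0 < delta /\
      forall s, 0 <= s <= 1 -> Rabs (s - t) < delta -> d (p s) (p t) < eps.

Fixpoint psum (f : nat -> R) (n : nat) : R :=
  match n with O => 0 | S k => psum f k + f k end.

Definition is_partition (t : nat -> R) (n : nat) : Prop :=
  t O = 0 /\ t n = 1 /\ forall i, (i < n)%nat -> t i < t (S i).

Definition plength (p : R -> X) : Rbar :=
  Lub_Rbar (fun s => exists t n, is_partition t n /\
                       s = psum (fun i => d (p (t i)) (p (t (S i)))) n).

Definition rectifiable (p : R -> X) : Prop := is_finite (plength p).

Definition rect_path_connected : Prop :=
  forall x y, exists p, is_path p x y /\ rectifiable p.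

Definition d_r_bar (x y : X) : Rbar :=
  Glb_Rbar (fun L => exists p, is_path p x y /\ plength p = Finite L).

(* real-valued d_r (finite when X is rectifiably path-connected) *)
Definition d_r (x y : X) : R := real (d_r_bar x y).

End MetricDefs.

Definition Rbar_maxr (a b : Rbar) : Rbar := if Rbar_le_dec a b then b else a.

Definition excess {X : Type} (rho : X -> X -> R) (A B : X -> Prop) : Rbar :=
  Lub_Rbar (fun s => exists a, A a /\
     s = real (Glb_Rbar (fun u => exists b, B b /\ u = rho a b))).

Definition hausdorff {X : Type} (rho : X -> X -> R) (A B : X -> Prop) : Rbar :=
  Rbar_maxr (excess rho A B) (excess rho B A).

Definition pointwise_contraction {X : Type} (d : X -> X -> R)
    (F : X -> X -> Prop) : Prop :=
  forall x, exists beta, 0 <= beta < 1 /\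
    exists N : X -> Prop, d_open d N /\ N x /\
      forall y, N y -> Rbar_le (hausdorff d (F x) (F y)) (Finite (beta * d x y)).

(** The proof joins x and y by a geodesic q, a path with
    d (q s) (q t) <= D |t - s| for D = d_r x y; it is the limit (Arzelà–Ascoli in the
    compact space X) of interpolated fine chains along near-minimal rectifiable paths.
    Continuous induction on the pointwise contraction of F gives
    H (F (q s), F (q t)) <= D |t - s|, and the Baire category theorem yields an interval
    [a, b] on which the contraction factor is uniformly 1 - r.  Therefore
    H (F (q u), F (q v)) <= Phi v - Phi u for a profile Phi of slope D outside [a, b] and
    (1 - r) D inside, so Phi 1 - Phi 0 < D.  Selecting points of F (q t) along finer and
    finer grids and passing to the limit turns every a in F x into a Phi-controlled path
    ending in F y, whose length bounds d_r from a to F y by Phi 1 - Phi 0; the reversed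
    geodesic bounds the other half of the Hausdorff distance. *)

From Stdlib Require Import Reals Lra Lia ZArith Classical ClassicalEpsilon Cantor.
From Coquelicot Require Import Coquelicot.
Open Scope R_scope.

Lemma Glb_Rbar_finite (E : R -> Prop) (m x0 : R) :
  E x0 -> (forall x, E x -> m <= x) ->
  exists g, Glb_Rbar E = Finite g /\ m <= g /\ (forall x, E x -> g <= x) /\
    (forall e, 0 < e -> exists x, E x /\ x < g + e).
Proof.
  intros Ex0 Hm. destruct (Glb_Rbar_correct E) as [Hlb Hglb].
  assert (Hup : Rbar_le (Glb_Rbar E) (Finite x0)) by (apply Hlb; auto).
  assert (Hlow : Rbar_le (Finite m) (Glb_Rbar E)) by (apply Hglb; intros x Hx; simpl; auto).
  destruct (Glb_Rbar E) as [g| |]; simpl in *; try contradiction.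
  exists g; split; [reflexivity|split; [exact Hlow|split]].
  - intros x Hx. exact (Hlb x Hx).
  - intros e He. apply NNPP; intro Hn.
    assert (Hge : Rbar_le (Finite (g + e)) (Finite g)).
    { apply Hglb. intros x Hx. simpl. apply Rnot_lt_le. intro Hx'. apply Hn. exists x; auto. }
    simpl in Hge. lra.
Qed.

Lemma Lub_Rbar_finite (E : R -> Prop) (M x0 : R) :
  E x0 -> (forall x, E x -> x <= M) ->
  exists l, Lub_Rbar E = Finite l /\ l <= M /\ (forall x, E x -> x <= l) /\
    (forall M', (forall x, E x -> x <= M') -> l <= M').
Proof.
  intros Ex0 HM. destruct (Lub_Rbar_correct E) as [Hub Hlub].
  assert (Hlow : Rbar_le (Finite x0) (Lub_Rbar E)) by (apply Hub; auto).
  assert (Hup : Rbar_le (Lub_Rbar E) (Finite M)) by (apply Hlub; intros x Hx; simpl; auto).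
  destruct (Lub_Rbar E) as [l| |]; simpl in *; try contradiction.
  exists l; split; [reflexivity|split; [exact Hup|split]].
  - intros x Hx. exact (Hub x Hx).
  - intros M' HM'. apply (Hlub (Finite M')). intros x Hx. exact (HM' x Hx).
Qed.

Lemma Rbar_maxr_le (a b c : Rbar) :
  Rbar_le (Rbar_maxr a b) c -> Rbar_le a c /\ Rbar_le b c.
Proof.
  unfold Rbar_maxr. destruct (Rbar_le_dec a b) as [Hab|Hab]; intros Hc; split; auto.
  - eapply Rbar_le_trans; eauto.
  - apply Rbar_not_le_lt, Rbar_lt_le in Hab. eapply Rbar_le_trans; eauto.
Qed.

Lemma Rbar_maxr_lub (a b c : Rbar) :
  Rbar_le a c -> Rbar_le b c -> Rbar_le (Rbar_maxr a b) c.
Proof. unfold Rbar_maxr. destruct (Rbar_le_dec a b); auto. Qed.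

(* [0 <= M] is needed because [real] sends an infimum equal to [m_infty] to [0]. *)
Lemma excess_le {X : Type} (rho : X -> X -> R) (A B : X -> Prop) (M : R) :
  0 <= M -> (forall a, A a -> exists b, B b /\ rho a b <= M) ->
  Rbar_le (excess rho A B) (Finite M).
Proof.
  intros HM Hnear. apply Lub_Rbar_correct. intros s [a [Ha ->]].
  destruct (Hnear a Ha) as [b [Hb Hab]].
  assert (Hinf : Rbar_le (Glb_Rbar (fun u => exists b, B b /\ u = rho a b)) (Finite (rho a b)))
    by (apply Glb_Rbar_correct; exists b; auto).
  destruct (Glb_Rbar _); simpl in *; lra.
Qed.

Lemma hausdorff_le {X : Type} (rho : X -> X -> R) (A B : X -> Prop) (M : R) :
  0 <= M -> (forall a, A a -> exists b, B b /\ rho a b <= M) ->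
  (forall b, B b -> exists a, A a /\ rho b a <= M) ->
  Rbar_le (hausdorff rho A B) (Finite M).
Proof. intros. apply Rbar_maxr_lub; apply excess_le; auto. Qed.

Lemma inv_INR_S_small e : 0 < e -> exists N, forall n, (N <= n)%nat -> / INR (S n) < e.
Proof.
  intros He. destruct (archimed_cor1 e He) as [N [HNe HN]]. exists N. intros n Hn.
  assert (HN0 : 0 < INR N) by (apply lt_0_INR; lia).
  assert (INR N <= INR (S n)) by (apply le_INR; lia).
  assert (/ INR (S n) <= / INR N) by (apply Rinv_le_contravar; lra). lra.
Qed.

Lemma inv_INR_S_pos n : 0 < / INR (S n).
Proof. apply Rinv_0_lt_compat, lt_0_INR; lia. Qed.

Definition strict_incr (f : nat -> nat) : Prop := forall n, (f n < f (S n))%nat.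

Lemma strict_incr_ge f : strict_incr f -> forall n, (n <= f n)%nat.
Proof. intros Hf n; induction n; [lia|]. specialize (Hf n); lia. Qed.

Lemma strict_incr_le f : strict_incr f -> forall m n, (m <= n)%nat -> (f m <= f n)%nat.
Proof. intros Hf m n Hmn; induction Hmn; [lia|]. specialize (Hf m0); lia. Qed.

Lemma strict_incr_comp f g : strict_incr f -> strict_incr g -> strict_incr (fun n => f (g n)).
Proof.
  intros Hf Hg n. specialize (Hg n).
  pose proof (strict_incr_le f Hf (S (g n)) (g (S n)) Hg). specialize (Hf (g n)). lia.
Qed.

Lemma fold_max_ge {I : Type} (f : I -> nat) (l : list I) i :
  List.In i l -> (f i <= List.fold_right (fun j acc => Nat.max (f j) acc) 0%nat l)%nat.
Proof.
  induction l as [|a l IH]; simpl; [tauto|]. intros [->|Hi]; [lia|]. specialize (IH Hi); lia.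
Qed.

Lemma scaled_inv_INR_S_small C e : 0 <= C -> 0 < e ->
  exists N, forall n, (N <= n)%nat -> C * / INR (S n) < e.
Proof.
  intros HC He. destruct (inv_INR_S_small (e / (C + 1))) as [N HN].
  { apply Rdiv_lt_0_compat; lra. }
  exists N. intros n Hn. specialize (HN n Hn). pose proof (inv_INR_S_pos n).
  apply Rle_lt_trans with ((C + 1) * / INR (S n)); [nra|].
  apply Rmult_lt_compat_l with (r := C + 1) in HN; [|lra].
  replace ((C + 1) * (e / (C + 1))) with e in HN by (field; lra). lra.
Qed.

Definition nat_floor (r : R) : nat := Z.to_nat (Int_part r).

Lemma nat_floor_spec r : 0 <= r -> INR (nat_floor r) <= r < INR (nat_floor r) + 1.
Proof.
  intros Hr. unfold nat_floor. destruct (base_Int_part r) as [Hlo Hhi].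
  assert (Hpos : (0 <= Int_part r)%Z) by (assert (-1 < Int_part r)%Z by (apply lt_IZR; lra); lia).
  rewrite INR_IZR_INZ, Z2Nat.id by exact Hpos. lra.
Qed.

Definition grid_index (N : nat) (t : R) : nat := nat_floor (t * INR N).

Lemma grid_index_spec N t : 0 <= t <= 1 ->
  (grid_index N t <= N)%nat /\ INR (grid_index N t) <= t * INR N < INR (grid_index N t) + 1.
Proof.
  intros Ht. unfold grid_index.
  assert (Hr : 0 <= t * INR N <= INR N) by (pose proof (pos_INR N); nra).
  destruct (nat_floor_spec (t * INR N)) as [Hlo Hhi]; [lra|].
  split; [|lra]. apply INR_le. lra.
Qed.

Lemma grid_index_0 N : grid_index N 0 = 0%nat.
Proof.
  unfold grid_index, nat_floor. rewrite Rmult_0_l. change 0 with (INR 0). rewrite Int_part_INR.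
  reflexivity.
Qed.

Lemma grid_index_1 N : grid_index N 1 = N.
Proof. unfold grid_index, nat_floor. rewrite Rmult_1_l, Int_part_INR. apply Nat2Z.id. Qed.

Lemma grid_point_near N t : (0 < N)%nat -> 0 <= t <= 1 ->
  Rabs (INR (grid_index N t) / INR N - t) <= / INR N.
Proof.
  intros HN Ht. destruct (grid_index_spec N t Ht) as [_ Hidx].
  assert (HNpos : 0 < INR N) by (apply lt_0_INR; lia).
  replace (INR (grid_index N t) / INR N - t) with ((INR (grid_index N t) - t * INR N) / INR N)
    by (field; lra).
  unfold Rdiv. rewrite Rabs_mult, (Rabs_right (/ INR N)) by (left; apply Rinv_0_lt_compat; auto).
  rewrite <- (Rmult_1_l (/ INR N)) at 2.
  apply Rmult_le_compat_r; [left; apply Rinv_0_lt_compat; auto|].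
  unfold Rabs; destruct Rcase_abs; lra.
Qed.

Definition dense_point (j : nat) : R :=
  let (i, b) := Cantor.of_nat j in Rmin 1 (INR i / INR (S b)).

Lemma dense_point_range j : 0 <= dense_point j <= 1.
Proof.
  unfold dense_point. destruct (Cantor.of_nat j) as [i b]. split; [|apply Rmin_l].
  apply Rmin_glb; [lra|]. apply Rdiv_le_0_compat; [apply pos_INR|apply lt_0_INR; lia].
Qed.

Lemma dense_point_near t b : 0 <= t <= 1 -> exists j, Rabs (t - dense_point j) <= / INR (S b).
Proof.
  intros Ht. exists (Cantor.to_nat (grid_index (S b) t, b)).
  unfold dense_point. rewrite Cantor.cancel_of_to.
  destruct (grid_index_spec (S b) t Ht) as [Hle _].
  assert (HS : 0 < INR (S b)) by (apply lt_0_INR; lia).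
  rewrite Rmin_right.
  - rewrite Rabs_minus_sym. apply grid_point_near; [lia|auto].
  - apply le_INR in Hle. apply (Rmult_le_reg_r (INR (S b))); auto.
    unfold Rdiv. rewrite Rmult_assoc, Rinv_l; lra.
Qed.

Lemma monotone_lipschitz_abs (Phi : R -> R) K :
  (forall u v, u <= v -> 0 <= Phi v - Phi u <= K * (v - u)) ->
  forall s t, Rabs (Phi t - Phi s) <= K * Rabs (t - s).
Proof.
  intros HPhi s t. destruct (Rle_dec s t) as [Hst|Hst].
  - specialize (HPhi s t Hst). rewrite !Rabs_right by lra. lra.
  - specialize (HPhi t s ltac:(lra)). rewrite !Rabs_left1 by lra. lra.
Qed.

Lemma grid_point_range m i : (0 < m)%nat -> (i <= m)%nat -> 0 <= INR i / INR m <= 1.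
Proof.
  intros Hm Him. assert (0 < INR m) by (apply lt_0_INR; auto). apply le_INR in Him.
  split; [apply Rdiv_le_0_compat; [apply pos_INR|lra]|].
  apply (Rmult_le_reg_r (INR m)); auto. unfold Rdiv. rewrite Rmult_assoc, Rinv_l; lra.
Qed.

Lemma grid_point_le_succ m i : (0 < m)%nat -> INR i / INR m <= INR (S i) / INR m.
Proof.
  intros Hm. assert (0 < INR m) by (apply lt_0_INR; auto). rewrite S_INR.
  unfold Rdiv. apply Rmult_le_compat_r; [left; apply Rinv_0_lt_compat|]; lra.
Qed.

Lemma chain_select {A : Type} (P : nat -> A -> Prop) (Rel : nat -> A -> A -> Prop) a0 m :
  P O a0 -> (forall i a, (i < m)%nat -> P i a -> exists b, P (S i) b /\ Rel i a b) ->
  exists z : nat -> A, z O = a0 /\ (forall i, (i <= m)%nat -> P i (z i)) /\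
    (forall i, (i < m)%nat -> Rel i (z i) (z (S i))).
Proof.
  intros Ha0. induction m as [|m IH]; intros Hext.
  - exists (fun _ => a0). split; [auto|split; [intros i Hi; replace i with O by lia; auto|lia]].
  - destruct IH as [z [Hz0 [HP HRel]]]; [intros i a Hi; apply Hext; lia|].
    destruct (Hext m (z m) ltac:(lia) (HP m (le_n _))) as [b [Hb Hzb]].
    exists (fun i => if Nat.eqb i (S m) then b else z i). split; [|split].
    + auto.
    + intros i Hi. destruct (Nat.eqb_spec i (S m)) as [->|Hne]; auto. apply HP; lia.
    + intros i Hi. destruct (Nat.eqb_spec i (S m)); [lia|].
      destruct (Nat.eqb_spec (S i) (S m)) as [Heq|Hne].
      * injection Heq as ->. auto.
      * apply HRel; lia.
Qed.

Lemma nested_intervals_meet (I : nat -> R * R) :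
  (forall k, fst (I k) <= fst (I (S k)) /\ fst (I (S k)) <= snd (I (S k)) /\
             snd (I (S k)) <= snd (I k)) ->
  fst (I O) <= snd (I O) ->
  exists t, forall k, fst (I k) <= t <= snd (I k).
Proof.
  intros Hnest H0.
  assert (Hmono : forall j k, (j <= k)%nat -> fst (I j) <= fst (I k) /\ snd (I k) <= snd (I j)).
  { intros j k Hjk. induction Hjk; [lra|]. pose proof (Hnest m). lra. }
  assert (Hvalid : forall k, fst (I k) <= snd (I k)) by (intros [|k]; [auto|apply Hnest]).
  assert (Hsep : forall j k, fst (I j) <= snd (I k)).
  { intros j k. pose proof (Hvalid j). pose proof (Hvalid k).
    destruct (Nat.le_ge_cases j k) as [Hjk|Hkj];
      [pose proof (Hmono j k Hjk)|pose proof (Hmono k j Hkj)]; lra. }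
  destruct (Lub_Rbar_finite (fun s => exists k, s = fst (I k)) (snd (I O)) (fst (I O)))
    as [t [_ [_ [Hub Hleast]]]].
  - exists O; reflexivity.
  - intros s [k ->]. apply Hsep.
  - exists t. intro k. split.
    + apply Hub. exists k; reflexivity.
    + apply Hleast. intros s [j ->]. apply Hsep.
Qed.

Definition closed_in_unit (E : R -> Prop) : Prop :=
  forall t, 0 <= t <= 1 -> (forall e, 0 < e -> exists t', E t' /\ Rabs (t' - t) < e) -> E t.

Lemma closed_avoiding_subinterval (E : R -> Prop) a b :
  closed_in_unit E -> 0 <= a < b /\ b <= 1 -> ~ (forall u, a <= u <= b -> E u) ->
  exists c c', a <= c < c' /\ c' <= b /\ forall t, c <= t <= c' -> ~ E t.
Proof.
  intros HE Hab Hnot.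
  destruct (not_all_ex_not _ _ Hnot) as [u Hu].
  apply imply_to_and in Hu as [Hu HnEu].
  assert (Hball : exists e, 0 < e /\ forall t, Rabs (t - u) < e -> ~ E t).
  { apply NNPP; intro Hno. apply HnEu, HE; [lra|]. intros e He.
    apply NNPP; intro Hfar. apply Hno. exists e; split; auto. intros t Ht HEt.
    apply Hfar. exists t; auto. }
  destruct Hball as [e [He Hball]].
  exists (Rmax a (u - e / 2)), (Rmin b (u + e / 2)).
  split; [|split]; [unfold Rmax, Rmin; repeat destruct Rle_dec; lra|apply Rmin_l|].
  intros t Ht. apply Hball.
  unfold Rmax, Rmin in Ht; repeat destruct Rle_dec in Ht; unfold Rabs; destruct Rcase_abs; lra.
Qed.

Lemma baire_unit_interval (E : nat -> R -> Prop) :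
  (forall t, 0 <= t <= 1 -> exists k, E k t) -> (forall k, closed_in_unit (E k)) ->
  exists k a b, 0 <= a < b /\ b <= 1 /\ forall u, a <= u <= b -> E k u.
Proof.
  intros Hcover Hclosed. apply NNPP; intro Hmeagre.
  set (shrink := fun k (ab : R * R) => epsilon (inhabits (0, 1)) (fun cd : R * R =>
    fst ab <= fst cd < snd cd /\ snd cd <= snd ab /\ forall t, fst cd <= t <= snd cd -> ~ E k t)).
  assert (Hshrink : forall k ab, 0 <= fst ab < snd ab /\ snd ab <= 1 ->
    fst ab <= fst (shrink k ab) < snd (shrink k ab) /\ snd (shrink k ab) <= snd ab /\
    forall t, fst (shrink k ab) <= t <= snd (shrink k ab) -> ~ E k t).
  { intros k ab Hab. apply (epsilon_spec (inhabits (0, 1)) (fun cd : R * R =>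
      fst ab <= fst cd < snd cd /\ snd cd <= snd ab /\ forall t, fst cd <= t <= snd cd -> ~ E k t)).
    assert (Hnot : ~ (forall u, fst ab <= u <= snd ab -> E k u))
      by (intros Hall; apply Hmeagre; exists k, (fst ab), (snd ab); split; [lra|split; [lra|auto]]).
    destruct (closed_avoiding_subinterval (E k) _ _ (Hclosed k) Hab Hnot) as [c [c' Hcc']].
    exists (c, c'). exact Hcc'. }
  set (I := fix I k := match k with O => (0, 1) | S j => shrink j (I j) end).
  assert (HI : forall k, (0 <= fst (I k) < snd (I k) /\ snd (I k) <= 1) /\
    fst (I k) <= fst (I (S k)) < snd (I (S k)) /\ snd (I (S k)) <= snd (I k) /\
    forall t, fst (I (S k)) <= t <= snd (I (S k)) -> ~ E k t).
  { induction k as [|k [Hvalid Hstep]].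
    - split; [simpl; lra|]. apply Hshrink. simpl; lra.
    - split; [lra|]. apply Hshrink. lra. }
  destruct (nested_intervals_meet I) as [t Ht].
  - intro k. pose proof (HI k). lra.
  - simpl; lra.
  - destruct (Hcover t) as [k Hk].
    + pose proof (Ht O). simpl in *. lra.
    + destruct (HI k) as [_ [_ [_ Havoid]]]. exact (Havoid t (Ht (S k)) Hk).
Qed.

Section Metric.
Context {X : Type} (d : X -> X -> R) (Hd : is_metric d).

Lemma dist_ge0 x y : 0 <= d x y.
Proof. apply Hd. Qed.

Lemma dist_xx x : d x x = 0.
Proof. apply Hd. reflexivity. Qed.

Lemma dist_eq0 x y : d x y = 0 -> x = y.
Proof. apply Hd. Qed.

Lemma dist_sym x y : d x y = d y x.
Proof. apply Hd. Qed.

Lemma dist_tri x y z : d x z <= d x y + d y z.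
Proof. apply Hd. Qed.

Lemma dist_gt0 x y : x <> y -> 0 < d x y.
Proof.
  intros Hxy. destruct (Rle_lt_or_eq_dec _ _ (dist_ge0 x y)) as [Hlt|Heq]; auto.
  symmetry in Heq. apply dist_eq0 in Heq. contradiction.
Qed.

Definition haus_le (A B : X -> Prop) (r : R) : Prop :=
  (forall a, A a -> forall e, 0 < e -> exists b, B b /\ d a b < r + e) /\
  (forall b, B b -> forall e, 0 < e -> exists a, A a /\ d b a < r + e).

Lemma haus_le_refl A : haus_le A A 0.
Proof. split; intros a Ha e He; exists a; rewrite dist_xx; split; auto; lra. Qed.

Lemma haus_le_sym A B r : haus_le A B r -> haus_le B A r.
Proof. intros [HAB HBA]; split; auto. Qed.

Lemma haus_le_weaken A B r r' : r <= r' -> haus_le A B r -> haus_le A B r'.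
Proof.
  intros Hr [HAB HBA]; split.
  - intros a Ha e He. destruct (HAB a Ha e He) as [b [Hb Hab]]. exists b; split; auto; lra.
  - intros b Hb e He. destruct (HBA b Hb e He) as [a [Ha Hba]]. exists a; split; auto; lra.
Qed.

Lemma haus_le_trans A B C r1 r2 :
  haus_le A B r1 -> haus_le B C r2 -> haus_le A C (r1 + r2).
Proof.
  intros [HAB HBA] [HBC HCB]; split.
  - intros a Ha e He. destruct (HAB a Ha (e/2)) as [b [Hb Hab]]; [lra|].
    destruct (HBC b Hb (e/2)) as [c [Hc Hbc]]; [lra|].
    exists c; split; auto. pose proof (dist_tri a b c); lra.
  - intros c Hc e He. destruct (HCB c Hc (e/2)) as [b [Hb Hcb]]; [lra|].
    destruct (HBA b Hb (e/2)) as [a [Ha Hba]]; [lra|].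
    exists a; split; auto. pose proof (dist_tri c b a); lra.
Qed.

Lemma haus_le_closed A B r : (forall e, 0 < e -> haus_le A B (r + e)) -> haus_le A B r.
Proof.
  intros Hr; split.
  - intros a Ha e He. destruct (Hr (e/2)) as [HAB _]; [lra|].
    destruct (HAB a Ha (e/2)) as [b [Hb Hab]]; [lra|]. exists b; split; auto; lra.
  - intros b Hb e He. destruct (Hr (e/2)) as [_ HBA]; [lra|].
    destruct (HBA b Hb (e/2)) as [a [Ha Hba]]; [lra|]. exists a; split; auto; lra.
Qed.

Lemma excess_near A B r : (exists b, B b) -> Rbar_le (excess d A B) (Finite r) ->
  forall a, A a -> forall e, 0 < e -> exists b, B b /\ d a b < r + e.
Proof.
  intros [b0 Hb0] Hex a Ha e He.
  destruct (Glb_Rbar_finite (fun u => exists b, B b /\ u = d a b) 0 (d a b0))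
    as [g [Eg [_ [_ Happrox]]]].
  - exists b0; auto.
  - intros u [b [_ ->]]. apply dist_ge0.
  - assert (Hg : Rbar_le (Finite g) (excess d A B)).
    { apply Lub_Rbar_correct. exists a; split; auto. rewrite Eg; reflexivity. }
    pose proof (Rbar_le_trans _ _ _ Hg Hex) as Hgr. simpl in Hgr.
    destruct (Happrox e He) as [u [[b [Hb ->]] Hu]]. exists b; split; auto; lra.
Qed.

Lemma haus_le_of_hausdorff A B r : (exists a, A a) -> (exists b, B b) ->
  Rbar_le (hausdorff d A B) (Finite r) -> haus_le A B r.
Proof.
  intros HA HB H. apply Rbar_maxr_le in H as [HAB HBA].
  split; eapply excess_near; eauto.
Qed.

Lemma haus_le_concat A B C k u v w :
  haus_le A B (k * (v - u)) -> haus_le B C (k * (w - v)) -> haus_le A C (k * (w - u)).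
Proof.
  intros HAB HBC. replace (k * (w - u)) with (k * (v - u) + k * (w - v)) by ring.
  exact (haus_le_trans _ _ _ _ _ HAB HBC).
Qed.

Lemma partition_sum_le_plength p L t n : plength d p = Finite L -> is_partition t n ->
  psum (fun i => d (p (t i)) (p (t (S i)))) n <= L.
Proof.
  intros HL Ht. unfold plength in HL.
  destruct (Lub_Rbar_correct (fun s => exists t n, is_partition t n /\
                       s = psum (fun i => d (p (t i)) (p (t (S i)))) n)) as [Hub _].
  rewrite HL in Hub. apply Hub. exists t, n; auto.
Qed.

Definition trivial_partition (i : nat) : R := match i with O => 0 | _ => 1 end.

Lemma trivial_partition_ok : is_partition trivial_partition 1.
Proof.
  split; [reflexivity|split; [reflexivity|]].
  intros i Hi. replace i with O by lia. simpl. lra.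
Qed.

Lemma dist_le_plength p L : plength d p = Finite L -> d (p 0) (p 1) <= L.
Proof.
  intros HL. pose proof (partition_sum_le_plength p L _ _ HL trivial_partition_ok). simpl in *. lra.
Qed.

Lemma plength_ge0 p L : plength d p = Finite L -> 0 <= L.
Proof. intros HL. pose proof (dist_le_plength p L HL). pose proof (dist_ge0 (p 0) (p 1)). lra. Qed.

Lemma partition_le t n : is_partition t n -> forall i j, (i <= j <= n)%nat -> t i <= t j.
Proof.
  intros [_ [_ Ht]] i j [Hij Hjn]. induction Hij; [lra|].
  specialize (Ht m ltac:(lia)). specialize (IHHij ltac:(lia)). lra.
Qed.

Section Control.
Variables (c : R -> X) (Phi : R -> R).
Hypothesis Hctrl : forall u v, 0 <= u -> u <= v -> v <= 1 -> d (c u) (c v) <= Phi v - Phi u.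

Lemma partition_sum_le_control t n : is_partition t n ->
  psum (fun i => d (c (t i)) (c (t (S i)))) n <= Phi 1 - Phi 0.
Proof.
  intros Ht.
  assert (Hk : forall k, (k <= n)%nat ->
    psum (fun i => d (c (t i)) (c (t (S i)))) k <= Phi (t k) - Phi (t O)).
  { induction k as [|k IH]; intros Hk; simpl; [lra|].
    specialize (IH ltac:(lia)).
    pose proof (partition_le t n Ht O k ltac:(lia)).
    pose proof (partition_le t n Ht k (S k) ltac:(lia)).
    pose proof (partition_le t n Ht (S k) n ltac:(lia)).
    destruct Ht as [Ht0 [Ht1 _]]. rewrite Ht0, Ht1 in *.
    pose proof (Hctrl (t k) (t (S k))). lra. }
  specialize (Hk n (le_n _)). destruct Ht as [Ht0 [Ht1 _]]. rewrite Ht0, Ht1 in Hk. exact Hk.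
Qed.

Lemma plength_le_of_control : exists L, plength d c = Finite L /\ L <= Phi 1 - Phi 0.
Proof.
  unfold plength.
  destruct (Lub_Rbar_finite (fun s => exists t n, is_partition t n /\
      s = psum (fun i => d (c (t i)) (c (t (S i)))) n) (Phi 1 - Phi 0)
      (psum (fun i => d (c (trivial_partition i)) (c (trivial_partition (S i)))) 1))
    as [L [HL [HLle _]]].
  - exists trivial_partition, 1%nat. split; [apply trivial_partition_ok|reflexivity].
  - intros s [t [n [Ht ->]]]. apply partition_sum_le_control; auto.
  - exists L; auto.
Qed.

Lemma path_of_control K : 0 <= K ->
  (forall u v, 0 <= u -> u <= v -> v <= 1 -> Phi v - Phi u <= K * (v - u)) ->
  is_path d c (c 0) (c 1).
Proof.
  intros HK HPhi. split; [auto|split; [auto|]]. intros t Ht e He.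
  exists (e / (K + 1)). split; [apply Rdiv_lt_0_compat; lra|]. intros s Hs Hst.
  assert (HKst : K * Rabs (s - t) < e).
  { apply Rmult_lt_compat_l with (r := K + 1) in Hst; [|lra].
    replace ((K + 1) * (e / (K + 1))) with e in Hst by (field; lra).
    pose proof (Rabs_pos (s - t)). nra. }
  destruct (Rle_dec s t).
  - pose proof (Hctrl s t). pose proof (HPhi s t). rewrite Rabs_left1 in HKst by lra. lra.
  - rewrite dist_sym. pose proof (Hctrl t s). pose proof (HPhi t s).
    rewrite Rabs_right in HKst by lra. lra.
Qed.

Lemma d_r_le_of_control K : 0 <= K ->
  (forall u v, 0 <= u -> u <= v -> v <= 1 -> Phi v - Phi u <= K * (v - u)) ->
  d_r d (c 0) (c 1) <= Phi 1 - Phi 0.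
Proof.
  intros HK HPhi. destruct plength_le_of_control as [L [HL HLle]].
  pose proof (path_of_control K HK HPhi) as Hpath.
  unfold d_r, d_r_bar.
  destruct (Glb_Rbar_finite (fun L => exists p, is_path d p (c 0) (c 1) /\ plength d p = Finite L)
    0 L) as [g [Eg [_ [Hg _]]]].
  - exists c; auto.
  - intros L' [p [_ HL']]. exact (plength_ge0 p L' HL').
  - rewrite Eg. simpl. assert (g <= L) by (apply Hg; exists c; auto). lra.
Qed.

End Control.

Section GreedyChain.
Variables (p : R -> X) (x y : X) (L h : R).
Hypotheses (Hp : is_path d p x y) (HL : plength d p = Finite L) (Hh : 0 < h).

Definition within_h_after (t s : R) : Prop :=
  t <= s <= 1 /\ forall u, t <= u <= s -> d (p t) (p u) <= h.

Definition greedy_next (t : R) : R := real (Lub_Rbar (within_h_after t)).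

Lemma path_continuous t : 0 <= t <= 1 -> forall e, 0 < e -> exists delta, 0 < delta /\
  forall s, 0 <= s <= 1 -> Rabs (s - t) < delta -> d (p s) (p t) < e.
Proof. apply Hp. Qed.

Lemma greedy_next_spec t : 0 <= t <= 1 ->
  t <= greedy_next t <= 1 /\
  (forall u, t <= u < greedy_next t -> d (p t) (p u) <= h) /\
  (forall s, within_h_after t s -> s <= greedy_next t).
Proof.
  intros Ht.
  assert (Htt : within_h_after t t).
  { split; [lra|]. intros u Hu. replace u with t by lra. rewrite dist_xx. lra. }
  destruct (Lub_Rbar_finite (within_h_after t) 1 t Htt) as [l [El [Hl1 [Hub Hleast]]]].
  { intros s [Hs _]; lra. }
  unfold greedy_next. rewrite El. simpl.
  split; [split; [apply Hub; auto|auto]|split; [|auto]].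
  intros u Hu. apply NNPP; intro Hfar.
  assert (l <= u); [|lra].
  apply Hleast. intros s [_ Hs]. apply Rnot_lt_le. intro Hus. apply Hfar. apply Hs. lra.
Qed.

Lemma greedy_next_step t : 0 <= t <= 1 -> d (p t) (p (greedy_next t)) <= h.
Proof.
  intros Ht. destruct (greedy_next_spec t Ht) as [Hrange [Hbefore _]].
  set (n := greedy_next t) in *.
  destruct (Req_dec t n) as [<-|Hne]; [rewrite dist_xx; lra|].
  apply Rnot_lt_le; intro Hgt.
  destruct (path_continuous n ltac:(lra) (d (p t) (p n) - h)) as [del [Hdel Hcont]]; [lra|].
  set (u := Rmax t (n - del / 2)).
  assert (Hu : t <= u < n /\ Rabs (u - n) < del)
    by (unfold u, Rmax; destruct Rle_dec; rewrite Rabs_left1; lra).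
  specialize (Hbefore u ltac:(lra)). specialize (Hcont u ltac:(lra) ltac:(lra)).
  pose proof (dist_tri (p t) (p u) (p n)). lra.
Qed.

Lemma greedy_next_far t : 0 <= t <= 1 -> greedy_next t < 1 -> h <= d (p t) (p (greedy_next t)).
Proof.
  intros Ht Hn1. destruct (greedy_next_spec t Ht) as [Hrange [Hbefore Hmax]].
  set (n := greedy_next t) in *.
  apply Rnot_lt_le; intro Hlt.
  destruct (path_continuous n ltac:(lra) (h - d (p t) (p n))) as [del [Hdel Hcont]]; [lra|].
  set (s := Rmin 1 (n + del / 2)).
  assert (Hs : n < s <= 1 /\ s - n < del) by (unfold s, Rmin; destruct Rle_dec; lra).
  assert (Hwithin : within_h_after t s).
  { split; [lra|]. intros u Hu. destruct (Rlt_dec u n); [apply Hbefore; lra|].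
    specialize (Hcont u ltac:(lra) ltac:(rewrite Rabs_right; lra)).
    pose proof (dist_tri (p t) (p n) (p u)). rewrite (dist_sym (p n)) in *. lra. }
  specialize (Hmax s Hwithin). lra.
Qed.

Lemma greedy_next_gt t : 0 <= t < 1 -> t < greedy_next t.
Proof.
  intros Ht. destruct (greedy_next_spec t ltac:(lra)) as [_ [_ Hmax]].
  destruct (path_continuous t ltac:(lra) h Hh) as [del [Hdel Hcont]].
  set (s := Rmin 1 (t + del / 2)).
  assert (Hs : t < s <= 1 /\ s - t < del) by (unfold s, Rmin; destruct Rle_dec; lra).
  assert (Hwithin : within_h_after t s).
  { split; [lra|]. intros u Hu. rewrite dist_sym. left.
    apply Hcont; [lra|rewrite Rabs_right; lra]. }
  specialize (Hmax s Hwithin). lra.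
Qed.

Fixpoint greedy_time (i : nat) : R :=
  match i with O => 0 | S k => greedy_next (greedy_time k) end.

Lemma greedy_time_range i : 0 <= greedy_time i <= 1.
Proof. induction i; simpl; [lra|]. pose proof (greedy_next_spec _ IHi). lra. Qed.

Lemma greedy_time_le i j : (i <= j)%nat -> greedy_time i <= greedy_time j.
Proof.
  intros Hij; induction Hij; [lra|]. simpl.
  pose proof (greedy_next_spec _ (greedy_time_range m)). lra.
Qed.

Lemma greedy_time_count m : greedy_time m < 1 -> INR m * h <= L.
Proof.
  intros Hm.
  set (t := fun i => if Nat.leb i m then greedy_time i else 1).
  assert (Hpart : is_partition t (S m)).
  { split; [reflexivity|split].
    - unfold t. rewrite (proj2 (Nat.leb_gt (S m) m) ltac:(lia)). reflexivity.
    - intros i Hi. unfold t. destruct (Nat.leb_spec i m); [|lia].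
      destruct (Nat.leb_spec (S i) m).
      + apply greedy_next_gt. pose proof (greedy_time_range i).
        pose proof (greedy_time_le i m ltac:(lia)). lra.
      + replace i with m by lia. lra. }
  assert (Hk : forall k, (k <= m)%nat ->
    INR k * h <= psum (fun i => d (p (t i)) (p (t (S i)))) k).
  { induction k as [|k IH]; intros Hk; simpl psum; [simpl; lra|].
    specialize (IH ltac:(lia)). rewrite S_INR. unfold t at 3 4.
    rewrite (proj2 (Nat.leb_le k m) ltac:(lia)), (proj2 (Nat.leb_le (S k) m) ltac:(lia)).
    pose proof (greedy_time_le (S k) m ltac:(lia)).
    pose proof (greedy_next_far (greedy_time k) (greedy_time_range k) ltac:(simpl in *; lra)).
    simpl. lra. }
  pose proof (partition_sum_le_plength p L t (S m) HL Hpart). simpl psum in *.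
  pose proof (Hk m (le_n _)). pose proof (dist_ge0 (p (t m)) (p (t (S m)))). lra.
Qed.

Lemma greedy_chain : exists m (z : nat -> X), (0 < m)%nat /\ z O = x /\ z m = y /\
  (forall i, (i < m)%nat -> d (z i) (z (S i)) <= h) /\ INR m * h <= L + h.
Proof.
  assert (HLh : 0 <= L / h) by (apply Rdiv_le_0_compat; [apply (plength_ge0 p)|]; auto; lra).
  set (m := S (nat_floor (L / h))).
  assert (Hm : L < INR m * h <= L + h).
  { destruct (nat_floor_spec _ HLh) as [Hlo Hhi]. unfold m. rewrite S_INR.
    assert (HLhh : L / h * h = L) by (field; lra).
    assert (L / h * h < (INR (nat_floor (L / h)) + 1) * h) by (apply Rmult_lt_compat_r; lra).
    assert (INR (nat_floor (L / h)) * h <= L / h * h) by (apply Rmult_le_compat_r; lra).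
    lra. }
  assert (Hend : greedy_time m = 1).
  { destruct (greedy_time_range m) as [_ [Hlt|Heq]]; auto.
    pose proof (greedy_time_count m Hlt). lra. }
  destruct Hp as [Hx [Hy _]].
  exists m, (fun i => p (greedy_time i)). split; [unfold m; lia|].
  split; [simpl; auto|split; [rewrite Hend; auto|split; [|lra]]].
  intros i Hi. apply greedy_next_step, greedy_time_range.
Qed.

End GreedyChain.

Section ChainInterpolation.
Variables (m : nat) (z : nat -> X) (Phi : R -> R) (K eta : R).
Hypotheses (Hm : (0 < m)%nat) (Heta : 0 <= eta)
  (HPhi : forall u v, u <= v -> 0 <= Phi v - Phi u <= K * (v - u))
  (Hz : forall i, (i < m)%nat ->
     d (z i) (z (S i)) <= Phi (INR (S i) / INR m) - Phi (INR i / INR m) + eta).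

Lemma chain_dist_le_ordered i j : (i <= j)%nat -> (j <= m)%nat ->
  d (z i) (z j) <= Phi (INR j / INR m) - Phi (INR i / INR m) + INR j * eta.
Proof.
  intros Hij Hjm. induction Hij as [|j Hij IH].
  - rewrite dist_xx. assert (0 <= INR i * eta) by (apply Rmult_le_pos; [apply pos_INR|auto]). lra.
  - specialize (IH ltac:(lia)). specialize (Hz j ltac:(lia)).
    pose proof (dist_tri (z i) (z j) (z (S j))).
    assert (INR (S j) * eta = INR j * eta + eta) by (rewrite S_INR; ring). lra.
Qed.

Lemma chain_dist_le i j : (i <= m)%nat -> (j <= m)%nat ->
  d (z i) (z j) <= Rabs (Phi (INR j / INR m) - Phi (INR i / INR m)) + INR m * eta.
Proof.
  intros Him Hjm.
  assert (Hmeta : forall k, (k <= m)%nat -> INR k * eta <= INR m * eta)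
    by (intros k Hk; apply Rmult_le_compat_r, le_INR; auto).
  destruct (Nat.le_ge_cases i j) as [Hij|Hji].
  - pose proof (chain_dist_le_ordered i j Hij Hjm). pose proof (Hmeta j Hjm).
    pose proof (Rle_abs (Phi (INR j / INR m) - Phi (INR i / INR m))). lra.
  - pose proof (chain_dist_le_ordered j i Hji Him). pose proof (Hmeta i Him).
    rewrite dist_sym, Rabs_minus_sym.
    pose proof (Rle_abs (Phi (INR i / INR m) - Phi (INR j / INR m))). lra.
Qed.

Lemma chain_interpolation s t : 0 <= s <= 1 -> 0 <= t <= 1 ->
  d (z (grid_index m s)) (z (grid_index m t)) <=
    Rabs (Phi t - Phi s) + 2 * K / INR m + INR m * eta.
Proof.
  intros Hs Ht.
  assert (HK : 0 <= K) by (pose proof (HPhi 0 1 ltac:(lra)); lra).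
  assert (Hnear : forall r, 0 <= r <= 1 ->
    Rabs (Phi (INR (grid_index m r) / INR m) - Phi r) <= K / INR m).
  { intros r Hr. eapply Rle_trans; [apply (monotone_lipschitz_abs Phi K HPhi)|].
    unfold Rdiv. apply Rmult_le_compat_l; auto. apply grid_point_near; auto. }
  pose proof (chain_dist_le _ _ (proj1 (grid_index_spec m s Hs)) (proj1 (grid_index_spec m t Ht))).
  pose proof (Hnear s Hs). pose proof (Hnear t Ht).
  set (ps := Phi (INR (grid_index m s) / INR m)) in *.
  set (pt := Phi (INR (grid_index m t) / INR m)) in *.
  assert (Rabs (pt - ps) <= Rabs (pt - Phi t) + Rabs (Phi t - Phi s) + Rabs (Phi s - ps)).
  { replace (pt - ps) with ((pt - Phi t) + (Phi t - Phi s) + (Phi s - ps)) by ring.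
    eapply Rle_trans; [apply Rabs_triang|]. pose proof (Rabs_triang (pt - Phi t) (Phi t - Phi s)).
    lra. }
  rewrite (Rabs_minus_sym (Phi s)) in *. unfold Rdiv in *. lra.
Qed.

End ChainInterpolation.

Section ContinuousInduction.
Variables (G : R -> X -> Prop) (D : R).
Hypothesis Hlocal : forall tau, 0 <= tau <= 1 -> exists delta, 0 < delta /\
  forall t, 0 <= t <= 1 -> Rabs (t - tau) < delta -> haus_le (G tau) (G t) (D * Rabs (t - tau)).

Lemma haus_le_local_forward tau delta t :
  (forall t, 0 <= t <= 1 -> Rabs (t - tau) < delta -> haus_le (G tau) (G t) (D * Rabs (t - tau))) ->
  0 <= tau <= t -> t <= 1 -> t - tau < delta -> haus_le (G tau) (G t) (D * (t - tau)).
Proof.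
  intros Htau Ht Ht1 Hclose. rewrite <- (Rabs_right (t - tau)) by lra.
  apply Htau; [|rewrite Rabs_right]; lra.
Qed.

Lemma haus_le_local_backward tau delta t :
  (forall t, 0 <= t <= 1 -> Rabs (t - tau) < delta -> haus_le (G tau) (G t) (D * Rabs (t - tau))) ->
  0 <= t <= tau -> tau <= 1 -> tau - t < delta -> haus_le (G t) (G tau) (D * (tau - t)).
Proof.
  intros Htau Ht Htau1 Hclose. apply haus_le_sym.
  replace (tau - t) with (Rabs (t - tau)) by (rewrite Rabs_left1; lra).
  apply Htau; [|rewrite Rabs_left1]; lra.
Qed.

Lemma haus_le_of_local s t : 0 <= s -> s <= t -> t <= 1 -> haus_le (G s) (G t) (D * (t - s)).
Proof.
  intros Hs Hst Ht.
  set (good := fun u => s <= u /\ u <= 1 /\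
    forall v, s <= v -> v <= u -> haus_le (G s) (G v) (D * (v - s))).
  assert (Hgood_s : good s).
  { split; [lra|split; [lra|]]. intros v Hv1 Hv2. replace v with s by lra.
    replace (D * (s - s)) with 0 by ring. apply haus_le_refl. }
  destruct (Lub_Rbar_finite good 1 s Hgood_s) as [T [_ [HT1 [Hub Hleast]]]].
  { intros u [_ [Hu _]]; auto. }
  assert (HsT : s <= T) by (apply Hub; auto).
  assert (Hbelow : forall v, s <= v -> v < T -> haus_le (G s) (G v) (D * (v - s))).
  { intros v Hv1 Hv2. apply NNPP; intro Hbad. assert (T <= v); [|lra].
    apply Hleast. intros u [_ [_ Hu]]. apply Rnot_lt_le; intro Hvu. apply Hbad, Hu; lra. }
  destruct (Hlocal T ltac:(lra)) as [delta [Hdelta HT]].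
  assert (Hupto : forall v, s <= v -> v <= T -> haus_le (G s) (G v) (D * (v - s))).
  { intros v Hv1 Hv2. destruct (Req_dec v T) as [->|Hne]; [|apply Hbelow; lra].
    destruct (Req_dec s T) as [<-|HsT'].
    { replace (D * (s - s)) with 0 by ring. apply haus_le_refl. }
    set (u := Rmax s (T - delta / 2)).
    assert (Hu : s <= u < T /\ T - u < delta) by (unfold u, Rmax; destruct Rle_dec; lra).
    apply haus_le_concat with (G u) u; [apply Hbelow; lra|].
    apply (haus_le_local_backward T delta); auto; lra. }
  assert (HT_1 : T = 1).
  { apply NNPP; intro HT_lt.
    set (w := Rmin 1 (T + delta / 2)).
    assert (Hw : T < w <= 1 /\ w - T < delta) by (unfold w, Rmin; destruct Rle_dec; lra).
    assert (Hgood_w : good w).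
    { split; [lra|split; [lra|]]. intros v Hv1 Hv2.
      destruct (Rle_dec v T); [apply Hupto; lra|].
      apply haus_le_concat with (G T) T; [apply Hupto; lra|].
      apply (haus_le_local_forward T delta); auto; lra. }
    specialize (Hub w Hgood_w). lra. }
  apply Hupto; lra.
Qed.

End ContinuousInduction.

(* Slope [D] outside [[a, b]] and [(1 - r) D] inside, so the total increase is
   [D - r D (b - a)]. *)
Definition gain_profile (D r a b t : R) : R := D * t - r * D * (Rmin (Rmax t a) b - a).

Lemma gain_profile_increment D r a b u v : 0 <= D -> 0 <= r <= 1 -> a <= b -> u <= v ->
  0 <= gain_profile D r a b v - gain_profile D r a b u <= D * (v - u).
Proof.
  intros HD Hr Hab Huv. unfold gain_profile.
  set (cu := Rmin (Rmax u a) b). set (cv := Rmin (Rmax v a) b).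
  assert (Hclamp : 0 <= cv - cu <= v - u)
    by (unfold cu, cv, Rmin, Rmax; repeat destruct Rle_dec; lra).
  replace (D * v - r * D * (cv - a) - (D * u - r * D * (cu - a)))
    with (D * (v - u) - r * D * (cv - cu)) by ring.
  assert (0 <= r * D * (cv - cu) <= D * (v - u)); [|lra].
  split; [apply Rmult_le_pos; [apply Rmult_le_pos|]; lra|].
  apply Rle_trans with (1 * D * (v - u)); [apply Rmult_le_compat; try lra; nra|lra].
Qed.

Lemma gain_profile_total D r a b : 0 <= a <= b -> b <= 1 ->
  gain_profile D r a b 1 - gain_profile D r a b 0 = D - r * D * (b - a).
Proof.
  intros Hab Hb. unfold gain_profile.
  replace (Rmin (Rmax 1 a) b) with b by (unfold Rmin, Rmax; repeat destruct Rle_dec; lra).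
  replace (Rmin (Rmax 0 a) b) with a by (unfold Rmin, Rmax; repeat destruct Rle_dec; lra).
  ring.
Qed.

Lemma haus_le_gain_profile (G : R -> X -> Prop) D r a b :
  0 <= a <= b -> b <= 1 ->
  (forall u v, 0 <= u -> u <= v -> v <= 1 -> haus_le (G u) (G v) (D * (v - u))) ->
  (forall u v, a <= u -> u <= v -> v <= b -> haus_le (G u) (G v) ((1 - r) * D * (v - u))) ->
  forall u v, 0 <= u -> u <= v -> v <= 1 ->
    haus_le (G u) (G v) (gain_profile D r a b v - gain_profile D r a b u).
Proof.
  intros Hab Hb Hglobal Hinterval u v Hu Huv Hv. unfold gain_profile.
  destruct (Rle_dec (Rmax u a) (Rmin v b)) as [HAB|HAB].
  - assert (HA : Rmin (Rmax u a) b = Rmax u a /\ u <= Rmax u a /\ a <= Rmax u a)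
      by (unfold Rmin, Rmax in *; repeat destruct Rle_dec; lra).
    assert (HB : Rmin (Rmax v a) b = Rmin v b /\ Rmin v b <= v /\ Rmin v b <= b)
      by (unfold Rmin, Rmax in *; repeat destruct Rle_dec; lra).
    destruct HA as [-> HA]. destruct HB as [-> HB].
    apply haus_le_weaken with (D * (Rmax u a - u) + (1 - r) * D * (Rmin v b - Rmax u a)
      + D * (v - Rmin v b)); [apply Req_le; ring|].
    apply haus_le_trans with (G (Rmin v b)); [apply haus_le_trans with (G (Rmax u a))|].
    + apply Hglobal; lra.
    + apply Hinterval; lra.
    + apply Hglobal; lra.
  - replace (Rmin (Rmax v a) b) with (Rmin (Rmax u a) b)
      by (unfold Rmin, Rmax in *; repeat destruct Rle_dec; lra).
    apply haus_le_weaken with (D * (v - u)); [apply Req_le; ring|]. apply Hglobal; lra.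
Qed.

Definition converges (v : nat -> X) (z : X) : Prop :=
  forall e, 0 < e -> exists N, forall n, (N <= n)%nat -> d (v n) z < e.

Lemma converges_dist_le v w z z' a : converges v z -> converges w z' ->
  (forall e, 0 < e -> exists N, forall n, (N <= n)%nat -> d (v n) (w n) <= a + e) ->
  d z z' <= a.
Proof.
  intros Hv Hw Hvw. apply Rnot_lt_le; intro Hlt.
  set (e := (d z z' - a) / 4).
  destruct (Hv e) as [N1 H1]; [unfold e; lra|].
  destruct (Hw e) as [N2 H2]; [unfold e; lra|].
  destruct (Hvw e) as [N3 H3]; [unfold e; lra|].
  set (n := (N1 + N2 + N3)%nat).
  specialize (H1 n ltac:(unfold n; lia)). specialize (H2 n ltac:(unfold n; lia)).
  specialize (H3 n ltac:(unfold n; lia)).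
  pose proof (dist_tri z (v n) z'). pose proof (dist_tri (v n) (w n) z').
  rewrite (dist_sym z (v n)) in *. unfold e in *. lra.
Qed.

Lemma converges_unique v z z' : converges v z -> converges v z' -> z = z'.
Proof.
  intros Hz Hz'. apply dist_eq0, Rle_antisym; [|apply dist_ge0].
  apply (converges_dist_le v v z z' 0 Hz Hz').
  intros e He. exists O. intros n _. rewrite dist_xx. lra.
Qed.

Lemma converges_const_eq v a z : (forall n, v n = a) -> converges v z -> z = a.
Proof.
  intros Hv Hz. apply (converges_unique v); auto.
  intros e He. exists O. intros n _. rewrite Hv, dist_xx. auto.
Qed.

Lemma compact_seq_closed A v z : d_compact d A ->
  (forall n, A (v n)) -> converges v z -> A z.
Proof.
  intros HA Hv Hz. apply NNPP; intro Hnz.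
  set (U := fun (k : nat) w => / INR (S k) < d z w).
  destruct (HA nat U) as [l Hl].
  - intros k w Hw. exists (d z w - / INR (S k)). unfold U in *. split; [lra|].
    intros w' Hw'. pose proof (dist_tri z w' w). rewrite (dist_sym w' w) in *. lra.
  - intros a Ha. assert (Hza : 0 < d z a) by (apply dist_gt0; congruence).
    destruct (inv_INR_S_small _ Hza) as [N HN]. exists N. apply HN; lia.
  - set (K := List.fold_right (fun j acc => Nat.max j acc) 0%nat l).
    destruct (Hz (/ INR (S K)) (inv_INR_S_pos K)) as [N HN].
    destruct (Hl (v N) (Hv N)) as [k [Hk Hu]]. unfold U in Hu.
    pose proof (fold_max_ge (fun j => j) l k Hk) as HkK. cbv beta in HkK. fold K in HkK.
    assert (/ INR (S K) <= / INR (S k)).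
    { apply Rinv_le_contravar; [apply lt_0_INR; lia|apply le_INR; lia]. }
    specialize (HN N (le_n _)). rewrite dist_sym in HN. lra.
Qed.

Section CompactSpace.
Hypothesis Hcompact : d_compact d (fun _ => True).

Lemma compact_cluster_point (v : nat -> X) :
  exists z, forall e, 0 < e -> forall N, exists n, (N <= n)%nat /\ d (v n) z < e.
Proof.
  apply NNPP; intro Hnone.
  assert (Hfar : forall z, exists e, 0 < e /\ exists N, forall n, (N <= n)%nat -> e <= d (v n) z).
  { intro z. apply NNPP; intro Hz. apply Hnone. exists z. intros e He N.
    apply NNPP; intro HN. apply Hz. exists e; split; auto. exists N. intros n Hn.
    apply Rnot_lt_le. intro Hlt. apply HN. exists n; auto. }
  set (I := { p : X * R * nat | 0 < snd (fst p) /\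
              forall n, (snd p <= n)%nat -> snd (fst p) <= d (v n) (fst (fst p)) }).
  set (U := fun (i : I) w => d (fst (fst (proj1_sig i))) w < snd (fst (proj1_sig i))).
  destruct (Hcompact I U) as [l Hl].
  - intros i z Hz. exists (snd (fst (proj1_sig i)) - d (fst (fst (proj1_sig i))) z).
    unfold U in *. split; [lra|]. intros w Hw.
    pose proof (dist_tri (fst (fst (proj1_sig i))) z w). lra.
  - intros z _. destruct (Hfar z) as [e [He [N HN]]].
    exists (exist _ (z, e, N) (conj He HN)). unfold U; simpl. rewrite dist_xx. auto.
  - set (M := List.fold_right (fun j acc => Nat.max (snd (proj1_sig j)) acc) 0%nat l).
    destruct (Hl (v M) Logic.I) as [i [Hi Hu]].
    pose proof (fold_max_ge (fun j : I => snd (proj1_sig j)) l i Hi) as HM.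
    destruct (proj2_sig i) as [He HN]. unfold U in Hu; simpl in *.
    specialize (HN M HM). rewrite dist_sym in HN. lra.
Qed.

Lemma compact_convergent_subseq (v : nat -> X) :
  exists phi, strict_incr phi /\ exists z, converges (fun n => v (phi n)) z.
Proof.
  destruct (compact_cluster_point v) as [z Hz].
  assert (Hnext : forall m k, exists n, (m < n)%nat /\ d (v n) z < / INR (S k)).
  { intros m k. destruct (Hz _ (inv_INR_S_pos k) (S m)) as [n [Hmn Hn]].
    exists n; split; [lia|auto]. }
  set (next := fun m k => proj1_sig (constructive_indefinite_description _ (Hnext m k))).
  assert (Hnext_spec : forall m k, (m < next m k)%nat /\ d (v (next m k)) z < / INR (S k))
    by (intros m k; exact (proj2_sig (constructive_indefinite_description _ (Hnext m k)))).
  set (phi := fix phi k := match k with O => next O O | S k' => next (phi k') k end).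
  exists phi. split.
  - intro n. apply Hnext_spec.
  - exists z. intros e He. destruct (inv_INR_S_small e He) as [N HN]. exists N. intros n Hn.
    assert (d (v (phi n)) z < / INR (S n)) by (destruct n; apply Hnext_spec).
    specialize (HN n Hn). lra.
Qed.

Lemma compact_cauchy_converges (w : nat -> X) :
  (forall e, 0 < e -> exists N, forall m n, (N <= m)%nat -> (N <= n)%nat -> d (w m) (w n) < e) ->
  exists z, converges w z.
Proof.
  intros Hw. destruct (compact_convergent_subseq w) as [phi [Hphi [z Hz]]]. exists z.
  intros e He. destruct (Hw (e/2)) as [N1 HN1]; [lra|].
  destruct (Hz (e/2)) as [N2 HN2]; [lra|]. exists N1. intros n Hn.
  set (k := Nat.max N1 N2). pose proof (strict_incr_ge _ Hphi k).
  specialize (HN1 n (phi k) Hn ltac:(unfold k in *; lia)).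
  specialize (HN2 k ltac:(unfold k; lia)).
  pose proof (dist_tri (w n) (w (phi k)) z). lra.
Qed.

Definition convergent_subseq (w : nat -> X) : nat -> nat :=
  proj1_sig (constructive_indefinite_description _ (compact_convergent_subseq w)).

Lemma convergent_subseq_spec w :
  strict_incr (convergent_subseq w) /\ exists z, converges (fun n => w (convergent_subseq w n)) z.
Proof.
  exact (proj2_sig (constructive_indefinite_description _ (compact_convergent_subseq w))).
Qed.

Section Diagonal.
Variable u : nat -> nat -> X.

Fixpoint nested_subseq (k : nat) : nat -> nat :=
  match k with
  | O => fun n => n
  | S k' => fun n => nested_subseq k' (convergent_subseq (fun m => u (nested_subseq k' m) k') n)
  end.

Lemma nested_subseq_incr k : strict_incr (nested_subseq k).
Proof.
  induction k as [|k IH]; simpl; [intro n; lia|].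
  apply (strict_incr_comp _ _ IH). apply convergent_subseq_spec.
Qed.

Lemma nested_subseq_refines k m :
  exists th, strict_incr th /\ forall n, nested_subseq (k + m) n = nested_subseq k (th n).
Proof.
  induction m as [|m [th [Hth Heq]]].
  - exists (fun n => n). split; [intro; lia|]. intro n. rewrite Nat.add_0_r. reflexivity.
  - exists (fun n => th (convergent_subseq (fun m0 => u (nested_subseq (k + m) m0) (k + m)) n)).
    split.
    + apply strict_incr_comp; auto. apply convergent_subseq_spec.
    + intro n. rewrite Nat.add_succ_r. apply Heq.
Qed.

Lemma diagonal_subseq :
  exists phi, strict_incr phi /\ forall j, exists z, converges (fun n => u (phi n) j) z.
Proof.
  exists (fun n => nested_subseq (S n) n). split.
  - intro n. change (nested_subseq (S (S n)) (S n)) with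
      (nested_subseq (S n) (convergent_subseq (fun m => u (nested_subseq (S n) m) (S n)) (S n))).
    pose proof (strict_incr_ge _ (proj1 (convergent_subseq_spec
      (fun m => u (nested_subseq (S n) m) (S n)))) (S n)) as Hge.
    pose proof (strict_incr_le _ (nested_subseq_incr (S n)) _ _ Hge).
    pose proof (nested_subseq_incr (S n) n). lia.
  - intro j. destruct (convergent_subseq_spec (fun m => u (nested_subseq j m) j)) as [_ [z Hz]].
    exists z. intros e He. destruct (Hz e He) as [N HN]. exists (N + j)%nat. intros n Hn.
    destruct (nested_subseq_refines (S j) (n - j)) as [th [Hth Heq]].
    replace (S n) with (S j + (n - j))%nat by lia. rewrite Heq. simpl.
    apply HN. pose proof (strict_incr_ge th Hth n). lia.
Qed.

End Diagonal.

Section ArzelaAscoli.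
Variables (f : nat -> R -> X) (Phi : R -> R) (K C : R).
Hypotheses (HK : 0 <= K) (HC : 0 <= C)
  (HPhi : forall s t, Rabs (Phi t - Phi s) <= K * Rabs (t - s))
  (Hf : forall n s t, 0 <= s <= 1 -> 0 <= t <= 1 ->
     d (f n s) (f n t) <= Rabs (Phi t - Phi s) + C * / INR (S n)).

Lemma equicontinuous_cauchy phi t : strict_incr phi -> 0 <= t <= 1 ->
  (forall j, exists z, converges (fun n => f (phi n) (dense_point j)) z) ->
  forall e, 0 < e -> exists N, forall m n, (N <= m)%nat -> (N <= n)%nat ->
    d (f (phi m) t) (f (phi n) t) < e.
Proof.
  intros Hphi Ht Hdense e He.
  destruct (scaled_inv_INR_S_small K (e / 8) HK) as [b Hb]; [lra|].
  specialize (Hb b (le_n _)).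
  destruct (dense_point_near t b Ht) as [j Hj].
  destruct (Hdense j) as [z Hz].
  destruct (Hz (e / 8)) as [N1 HN1]; [lra|].
  destruct (scaled_inv_INR_S_small C (e / 8) HC) as [N2 HN2]; [lra|].
  assert (Hclose : forall n, (Nat.max N1 N2 <= n)%nat -> d (f (phi n) t) z < 3 * e / 8).
  { intros n Hn. pose proof (strict_incr_ge _ Hphi n).
    specialize (HN1 n ltac:(lia)). specialize (HN2 (phi n) ltac:(lia)).
    pose proof (Hf (phi n) t (dense_point j) Ht (dense_point_range j)).
    pose proof (HPhi t (dense_point j)).
    assert (K * Rabs (dense_point j - t) <= K * / INR (S b))
      by (rewrite Rabs_minus_sym; apply Rmult_le_compat_l; auto).
    pose proof (dist_tri (f (phi n) t) (f (phi n) (dense_point j)) z). lra. }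
  exists (Nat.max N1 N2). intros m n Hm Hn.
  pose proof (Hclose m Hm). pose proof (Hclose n Hn).
  pose proof (dist_tri (f (phi m) t) z (f (phi n) t)). rewrite (dist_sym z) in *. lra.
Qed.

Lemma arzela_ascoli : exists phi g, strict_incr phi /\
  (forall t, 0 <= t <= 1 -> converges (fun n => f (phi n) t) (g t)) /\
  (forall s t, 0 <= s <= 1 -> 0 <= t <= 1 -> d (g s) (g t) <= Rabs (Phi t - Phi s)).
Proof.
  destruct (diagonal_subseq (fun n j => f n (dense_point j))) as [phi [Hphi Hdense]].
  set (g := fun t => epsilon (inhabits (f O 0)) (converges (fun n => f (phi n) t))).
  assert (Hg : forall t, 0 <= t <= 1 -> converges (fun n => f (phi n) t) (g t)).
  { intros t Ht. apply epsilon_spec, compact_cauchy_converges.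
    apply equicontinuous_cauchy; auto. }
  exists phi, g. split; [auto|split; [auto|]].
  intros s t Hs Ht. apply (converges_dist_le _ _ _ _ _ (Hg s Hs) (Hg t Ht)).
  intros e He. destruct (scaled_inv_INR_S_small C e HC He) as [N HN].
  exists N. intros n Hn. pose proof (strict_incr_ge _ Hphi n).
  specialize (HN (phi n) ltac:(lia)). specialize (Hf (phi n) s t Hs Ht). lra.
Qed.

End ArzelaAscoli.

Lemma arzela_ascoli_choice (P : (R -> X) -> Prop) (Phi : R -> R) (K C : R) :
  0 <= K -> 0 <= C -> (forall s t, Rabs (Phi t - Phi s) <= K * Rabs (t - s)) ->
  (forall n, exists f, P f /\ forall s t, 0 <= s <= 1 -> 0 <= t <= 1 ->
     d (f s) (f t) <= Rabs (Phi t - Phi s) + C * / INR (S n)) ->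
  exists (f : nat -> R -> X) g, (forall n, P (f n)) /\
    (forall t, 0 <= t <= 1 -> converges (fun n => f n t) (g t)) /\
    (forall s t, 0 <= s <= 1 -> 0 <= t <= 1 -> d (g s) (g t) <= Rabs (Phi t - Phi s)).
Proof.
  intros HK HC HPhi Happrox.
  set (f := fun n => proj1_sig (constructive_indefinite_description _ (Happrox n))).
  assert (Hf : forall n, P (f n) /\ forall s t, 0 <= s <= 1 -> 0 <= t <= 1 ->
      d (f n s) (f n t) <= Rabs (Phi t - Phi s) + C * / INR (S n))
    by (intro n; exact (proj2_sig (constructive_indefinite_description _ (Happrox n)))).
  destruct (arzela_ascoli f Phi K C HK HC HPhi) as [phi [g [_ [Hg Hlip]]]]; [apply Hf|].
  exists (fun n => f (phi n)), g. split; [intro n; apply Hf|auto].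
Qed.

Section RectPathConnected.
Hypothesis Hrpc : rect_path_connected d.

Lemma d_r_spec x y :
  d x y <= d_r d x y /\ forall e, 0 < e -> exists p L, is_path d p x y /\
     plength d p = Finite L /\ L < d_r d x y + e.
Proof.
  destruct (Hrpc x y) as [p0 [Hp0 Hrect]].
  destruct (Glb_Rbar_finite (fun L => exists p, is_path d p x y /\ plength d p = Finite L) (d x y)
     (real (plength d p0))) as [g [Eg [Hg0 [_ Happrox]]]].
  - exists p0; split; [exact Hp0|symmetry; exact Hrect].
  - intros L [p [[Hx [Hy _]] HL]]. rewrite <- Hx, <- Hy. exact (dist_le_plength p L HL).
  - unfold d_r, d_r_bar. rewrite Eg. simpl. split; auto.
    intros e He. destruct (Happrox e He) as [L [[p [Hp HL]] HLt]]. exists p, L; auto.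
Qed.

Lemma d_r_ge0 x y : 0 <= d_r d x y.
Proof. pose proof (proj1 (d_r_spec x y)). pose proof (dist_ge0 x y). lra. Qed.

Lemma approx_geodesic x y h : 0 < h -> exists f : R -> X, f 0 = x /\ f 1 = y /\
  forall s t, 0 <= s <= 1 -> 0 <= t <= 1 -> d (f s) (f t) <= d_r d x y * Rabs (t - s) + 4 * h.
Proof.
  intros Hh. destruct (proj2 (d_r_spec x y) h Hh) as [p [L [Hp [HL HLlt]]]].
  destruct (greedy_chain p x y L h Hp HL Hh) as [m [z [Hm [Hz0 [Hzm [Hstep Hmh]]]]]].
  set (K := INR m * h).
  assert (HPhi : forall u v, u <= v -> 0 <= K * v - K * u <= K * (v - u))
    by (intros u v Huv; assert (0 <= K) by (unfold K; pose proof (pos_INR m); nra); nra).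
  assert (Hz : forall i, (i < m)%nat ->
    d (z i) (z (S i)) <= K * (INR (S i) / INR m) - K * (INR i / INR m) + 0).
  { intros i Hi. replace (K * (INR (S i) / INR m) - K * (INR i / INR m) + 0) with h.
    - apply Hstep; auto.
    - unfold K. rewrite S_INR. field. apply not_0_INR. lia. }
  exists (fun t => z (grid_index m t)). split; [|split].
  - rewrite grid_index_0. auto.
  - rewrite grid_index_1. auto.
  - intros s t Hs Ht.
    pose proof (chain_interpolation m z (fun t => K * t) K 0 Hm (Rle_refl 0) HPhi Hz s t Hs Ht)
      as Hinterp.
    cbv beta in Hinterp. replace (K * t - K * s) with (K * (t - s)) in Hinterp by ring.
    rewrite Rabs_mult, Rmult_0_r, Rplus_0_r in Hinterp.
    replace (2 * K / INR m) with (2 * h) in Hinterp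
      by (unfold K; field; apply not_0_INR; lia).
    assert (Rabs (t - s) <= 1) by (unfold Rabs; destruct Rcase_abs; lra).
    assert (Rabs K = K) by (apply Rabs_right; unfold K; pose proof (pos_INR m); nra).
    assert (K * Rabs (t - s) <= (d_r d x y + 2 * h) * Rabs (t - s))
      by (apply Rmult_le_compat_r; [apply Rabs_pos|unfold K; lra]).
    pose proof (Rabs_pos (t - s)). nra.
Qed.

Lemma geodesic x y : exists q : R -> X, q 0 = x /\ q 1 = y /\
  forall s t, 0 <= s <= 1 -> 0 <= t <= 1 -> d (q s) (q t) <= d_r d x y * Rabs (t - s).
Proof.
  set (D := d_r d x y).
  assert (HD : 0 <= D) by apply d_r_ge0.
  assert (HPhi : forall s t, Rabs (D * t - D * s) = D * Rabs (t - s))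
    by (intros s t; rewrite <- Rmult_minus_distr_l, Rabs_mult, Rabs_right; lra).
  destruct (arzela_ascoli_choice (fun f => f 0 = x /\ f 1 = y) (fun t => D * t) D 4)
    as [f [q [Hends [Hq Hlip]]]]; [auto|lra|intros s t; rewrite HPhi; lra| |].
  { intro n. destruct (approx_geodesic x y _ (inv_INR_S_pos n)) as [f [Hf0 [Hf1 Hf]]].
    exists f. split; [auto|]. intros s t Hs Ht. rewrite HPhi. apply Hf; auto. }
  exists q. split; [|split].
  - apply (converges_const_eq (fun n => f n 0)); [intro n; apply Hends|apply Hq; lra].
  - apply (converges_const_eq (fun n => f n 1)); [intro n; apply Hends|apply Hq; lra].
  - intros s t Hs Ht. rewrite <- HPhi. apply Hlip; auto.
Qed.

End RectPathConnected.

Section Selection.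
Variables (G : R -> X -> Prop) (Phi : R -> R) (K : R) (a0 : X).
Hypotheses (HG1 : d_compact d (G 1)) (Ha0 : G 0 a0)
  (Hhaus : forall u v, 0 <= u -> u <= v -> v <= 1 -> haus_le (G u) (G v) (Phi v - Phi u))
  (HPhi : forall u v, u <= v -> 0 <= Phi v - Phi u <= K * (v - u)).

Lemma selection_chain m : (0 < m)%nat -> exists z : nat -> X, z O = a0 /\
  (forall i, (i <= m)%nat -> G (INR i / INR m) (z i)) /\
  (forall i, (i < m)%nat ->
     d (z i) (z (S i)) <= Phi (INR (S i) / INR m) - Phi (INR i / INR m) + / (INR m * INR m)).
Proof.
  intros Hm.
  apply (chain_select (fun i a => G (INR i / INR m) a) (fun i a b =>
    d a b <= Phi (INR (S i) / INR m) - Phi (INR i / INR m) + / (INR m * INR m))).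
  - replace (INR 0 / INR m) with 0 by (simpl; unfold Rdiv; ring). exact Ha0.
  - intros i a Hi Ha.
    assert (Heps : 0 < / (INR m * INR m))
      by (assert (0 < INR m) by (apply lt_0_INR; auto); apply Rinv_0_lt_compat; nra).
    destruct (Hhaus (INR i / INR m) (INR (S i) / INR m)) as [Hfwd _].
    + apply grid_point_range; lia.
    + apply grid_point_le_succ; auto.
    + apply grid_point_range; lia.
    + destruct (Hfwd a Ha _ Heps) as [b [Hb Hab]]. exists b. split; [auto|lra].
Qed.

Lemma approx_selection n : exists f : R -> X, f 0 = a0 /\ G 1 (f 1) /\
  forall s t, 0 <= s <= 1 -> 0 <= t <= 1 ->
    d (f s) (f t) <= Rabs (Phi t - Phi s) + (2 * K + 1) * / INR (S n).
Proof.
  destruct (selection_chain (S n) ltac:(lia)) as [z [Hz0 [HzG Hstep]]].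
  assert (Hm : 0 < INR (S n)) by (apply lt_0_INR; lia).
  exists (fun t => z (grid_index (S n) t)). split; [|split].
  - rewrite grid_index_0. auto.
  - rewrite grid_index_1. replace 1 with (INR (S n) / INR (S n)) at 1 by (field; lra).
    apply HzG. auto.
  - intros s t Hs Ht.
    assert (Heta : 0 <= / (INR (S n) * INR (S n))) by (left; apply Rinv_0_lt_compat; nra).
    pose proof (chain_interpolation (S n) z Phi K _ ltac:(lia) Heta HPhi Hstep s t Hs Ht) as Hint.
    replace (INR (S n) * / (INR (S n) * INR (S n))) with (/ INR (S n)) in Hint by (field; lra).
    replace ((2 * K + 1) * / INR (S n)) with (2 * K / INR (S n) + / INR (S n)) by (field; lra).
    lra.
Qed.

Lemma selection : exists b, G 1 b /\ d_r d a0 b <= Phi 1 - Phi 0.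
Proof.
  assert (HK : 0 <= K) by (pose proof (HPhi 0 1 ltac:(lra)); lra).
  destruct (arzela_ascoli_choice (fun f => f 0 = a0 /\ G 1 (f 1)) Phi K (2 * K + 1))
    as [f [c [Hends [Hc_lim Hc_lip]]]];
    [auto|lra|apply monotone_lipschitz_abs, HPhi| |].
  { intro n. destruct (approx_selection n) as [f [Hf0 [Hf1 Hf]]]. exists f; auto. }
  assert (Hc0 : c 0 = a0)
    by (apply (converges_const_eq (fun n => f n 0)); [intro n; apply Hends|apply Hc_lim; lra]).
  assert (Hc1 : G 1 (c 1))
    by (apply (compact_seq_closed (G 1) (fun n => f n 1));
        [auto|intro n; apply Hends|apply Hc_lim; lra]).
  exists (c 1). split; auto. rewrite <- Hc0.
  apply (d_r_le_of_control c Phi) with (K := K); auto.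
  - intros u v Hu Huv Hv. specialize (Hc_lip u v ltac:(lra) ltac:(lra)).
    rewrite Rabs_right in Hc_lip; [auto|]. apply Rle_ge, HPhi; auto.
  - intros u v _ Huv _. apply HPhi; auto.
Qed.

End Selection.

Section ContractionAlongPath.
Variables (F : X -> X -> Prop) (q : R -> X) (D : R).
Hypotheses (HF : forall x, in_KX d (F x)) (Hpc : pointwise_contraction d F) (HD : 0 < D)
  (Hq : forall s t, 0 <= s <= 1 -> 0 <= t <= 1 -> d (q s) (q t) <= D * Rabs (t - s)).

Lemma local_contraction_along tau : 0 <= tau <= 1 -> exists beta delta,
  0 <= beta < 1 /\ 0 < delta /\ forall t, 0 <= t <= 1 -> Rabs (t - tau) < delta ->
    haus_le (F (q tau)) (F (q t)) (beta * (D * Rabs (t - tau))).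
Proof.
  intros Htau. destruct (Hpc (q tau)) as [beta [Hbeta [N [HNopen [HNtau HN]]]]].
  destruct (HNopen (q tau) HNtau) as [e [He Hball]].
  exists beta, (e / D). split; [auto|split; [apply Rdiv_lt_0_compat; lra|]].
  intros t Ht Hclose.
  assert (Hdist : d (q tau) (q t) < e).
  { apply Rle_lt_trans with (D * Rabs (t - tau)); [apply Hq; auto|].
    apply Rmult_lt_compat_l with (r := D) in Hclose; auto.
    replace (D * (e / D)) with e in Hclose by (field; lra). exact Hclose. }
  eapply haus_le_weaken; [|apply haus_le_of_hausdorff; [apply HF|apply HF|apply HN, Hball, Hdist]].
  apply Rmult_le_compat_l; [lra|apply Hq; auto].
Qed.

Lemma haus_le_along_ordered s t : 0 <= s -> s <= t -> t <= 1 ->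
  haus_le (F (q s)) (F (q t)) (D * (t - s)).
Proof.
  apply (haus_le_of_local (fun t => F (q t))). intros tau Htau.
  destruct (local_contraction_along tau Htau) as [beta [delta [Hbeta [Hdelta Hloc]]]].
  exists delta. split; auto. intros t' Ht' Hclose.
  eapply haus_le_weaken; [|exact (Hloc t' Ht' Hclose)].
  assert (0 <= D * Rabs (t' - tau)) by (apply Rmult_le_pos; [lra|apply Rabs_pos]). nra.
Qed.

Lemma haus_le_along s t : 0 <= s <= 1 -> 0 <= t <= 1 ->
  haus_le (F (q s)) (F (q t)) (D * Rabs (t - s)).
Proof.
  intros Hs Ht. destruct (Rle_dec s t).
  - rewrite Rabs_right by lra. apply haus_le_along_ordered; lra.
  - rewrite Rabs_left1 by lra. apply haus_le_sym.
    replace (D * - (t - s)) with (D * (s - t)) by ring. apply haus_le_along_ordered; lra.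
Qed.

Definition contraction_margin (k : nat) : R := / INR (S (S k)).

Lemma contraction_margin_range k : 0 < contraction_margin k <= / 2.
Proof.
  unfold contraction_margin. split; [apply inv_INR_S_pos|].
  apply Rinv_le_contravar; [lra|]. rewrite !S_INR. pose proof (pos_INR k). lra.
Qed.

Definition uniformly_contracting (k : nat) (tau : R) : Prop :=
  0 <= tau <= 1 /\ forall t, 0 <= t <= 1 -> Rabs (t - tau) < contraction_margin k ->
    haus_le (F (q tau)) (F (q t)) ((1 - contraction_margin k) * (D * Rabs (t - tau))).

Lemma uniformly_contracting_cover tau : 0 <= tau <= 1 -> exists k, uniformly_contracting k tau.
Proof.
  intros Htau. destruct (local_contraction_along tau Htau) as [beta [delta [Hbeta [Hdelta Hloc]]]].
  destruct (inv_INR_S_small (Rmin delta (1 - beta))) as [k Hk].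
  { apply Rmin_glb_lt; lra. }
  specialize (Hk (S k) ltac:(lia)). fold (contraction_margin k) in Hk.
  assert (Hmargin : contraction_margin k < delta /\ contraction_margin k < 1 - beta)
    by (split; eapply Rlt_le_trans; eauto; [apply Rmin_l|apply Rmin_r]).
  exists k. split; auto. intros t Ht Hclose.
  eapply haus_le_weaken; [|apply Hloc; auto; lra].
  apply Rmult_le_compat_r; [|lra].
  apply Rmult_le_pos; [lra|apply Rabs_pos].
Qed.

Lemma uniformly_contracting_closed k : closed_in_unit (uniformly_contracting k).
Proof.
  intros tau Htau Happrox. split; auto. intros t Ht Hclose.
  pose proof (contraction_margin_range k) as Hr. set (r := contraction_margin k) in *.
  apply haus_le_closed. intros e He.
  set (eps := Rmin (r - Rabs (t - tau)) (e / (2 * D + 1))).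
  assert (Heps : 0 < eps /\ eps <= r - Rabs (t - tau) /\ eps * (2 * D + 1) <= e).
  { unfold eps.
    split; [apply Rmin_glb_lt; [lra|apply Rdiv_lt_0_compat; lra]|split; [apply Rmin_l|]].
    apply Rle_trans with (e / (2 * D + 1) * (2 * D + 1)); [|right; field; lra].
    apply Rmult_le_compat_r; [lra|apply Rmin_r]. }
  destruct (Happrox eps ltac:(lra)) as [tau' [[Htau' Hunif] Hnear]]. fold r in Hunif.
  assert (Htri : Rabs (t - tau') <= Rabs (t - tau) + Rabs (tau' - tau)).
  { replace (t - tau') with ((t - tau) - (tau' - tau)) by ring.
    unfold Rabs; repeat destruct Rcase_abs; lra. }
  pose proof (haus_le_trans _ _ _ _ _ (haus_le_along tau tau' Htau Htau')
    (Hunif t Ht ltac:(lra))) as Hchain.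
  eapply haus_le_weaken; [|exact Hchain].
  assert ((1 - r) * (D * Rabs (t - tau')) <= (1 - r) * (D * (Rabs (t - tau) + Rabs (tau' - tau))))
    by (apply Rmult_le_compat_l; [lra|apply Rmult_le_compat_l; lra]).
  pose proof (Rabs_pos (tau' - tau)) as HB. set (B := Rabs (tau' - tau)) in *.
  assert (HDB : (1 - r) * (D * B) <= D * B)
    by (assert (0 <= D * B) by (apply Rmult_le_pos; lra); nra).
  assert (HDeps : D * B <= D * eps) by (apply Rmult_le_compat_l; lra).
  assert ((1 - r) * (D * (Rabs (t - tau) + B)) = (1 - r) * (D * Rabs (t - tau)) + (1 - r) * (D * B))
    by ring.
  lra.
Qed.

Lemma contraction_gain : exists r a b, 0 < r <= 1 /\ 0 <= a < b /\ b <= 1 /\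
  forall u v, a <= u -> u <= v -> v <= b ->
    haus_le (F (q u)) (F (q v)) ((1 - r) * D * (v - u)).
Proof.
  destruct (baire_unit_interval uniformly_contracting uniformly_contracting_cover
    uniformly_contracting_closed) as [k [a [b [Hab [Hb Hunif]]]]].
  pose proof (contraction_margin_range k) as Hr. set (r := contraction_margin k) in *.
  exists r, a, (Rmin b (a + r / 2)).
  split; [lra|]. split; [split; [lra|apply Rmin_glb_lt; lra]|].
  split; [eapply Rle_trans; [apply Rmin_l|lra]|].
  intros u v Hu Huv Hv. assert (Hvb : v <= b /\ v - u < r)
    by (unfold Rmin in Hv; destruct Rle_dec in Hv; lra).
  destruct (Hunif u ltac:(lra)) as [_ Hu_unif]. fold r in Hu_unif.
  rewrite <- (Rabs_right (v - u)) by lra.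
  replace ((1 - r) * D * Rabs (v - u)) with ((1 - r) * (D * Rabs (v - u))) by ring.
  apply Hu_unif; [lra|rewrite Rabs_right; lra].
Qed.

Lemma contraction_along_path : exists M, M < D /\
  forall a, F (q 0) a -> exists b, F (q 1) b /\ d_r d a b <= M.
Proof.
  destruct contraction_gain as [r [a [b [Hr [Hab [Hb Hinterval]]]]]].
  set (Phi := gain_profile D r a b).
  exists (Phi 1 - Phi 0). split.
  - unfold Phi. rewrite gain_profile_total by lra.
    assert (0 < r * D * (b - a)) by (apply Rmult_lt_0_compat; [apply Rmult_lt_0_compat|]; lra).
    lra.
  - intros a0 Ha0. apply (selection (fun t => F (q t)) Phi D a0).
    + apply HF.
    + exact Ha0.
    + apply haus_le_gain_profile; [lra|lra|apply haus_le_along_ordered|exact Hinterval].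
    + intros u v Huv. apply gain_profile_increment; lra.
Qed.

End ContractionAlongPath.

End CompactSpace.
End Metric.

Theorem lemma19 (X : Type) (d : X -> X -> R) (F : X -> X -> Prop) :
  is_metric d ->
  inhabited X ->
  d_compact d (fun _ => True) ->
  rect_path_connected d ->
  (forall x, in_KX d (F x)) ->
  pointwise_contraction d F ->
  forall x y : X, x <> y ->
    Rbar_lt (hausdorff (d_r d) (F x) (F y)) (Finite (d_r d x y)).
Proof.
  intros Hd _ Hcompact Hrpc HF Hpc x y Hxy.
  destruct (geodesic d Hd Hcompact Hrpc x y) as [q [Hq0 [Hq1 Hq]]].
  assert (HD : 0 < d_r d x y)
    by (pose proof (proj1 (d_r_spec d Hrpc x y)); pose proof (dist_gt0 d Hd x y Hxy); lra).
  assert (Hq_rev : forall s t, 0 <= s <= 1 -> 0 <= t <= 1 ->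
    d (q (1 - s)) (q (1 - t)) <= d_r d x y * Rabs (t - s)).
  { intros s t Hs Ht. replace (t - s) with (- ((1 - t) - (1 - s))) by ring.
    rewrite Rabs_Ropp. apply Hq; lra. }
  destruct (contraction_along_path d Hd Hcompact F q _ HF Hpc HD Hq) as [M1 [HM1 Hxy_near]].
  destruct (contraction_along_path d Hd Hcompact F (fun t => q (1 - t)) _ HF Hpc HD Hq_rev)
    as [M2 [HM2 Hyx_near]].
  rewrite Rminus_0_r, Rminus_diag, Hq0, Hq1 in *.
  apply Rbar_le_lt_trans with (Finite (Rmax 0 (Rmax M1 M2))).
  - apply hausdorff_le; [apply Rmax_l| |].
    + intros a Ha. destruct (Hxy_near a Ha) as [b [Hb Hab]]. exists b. split; auto.
      eapply Rle_trans; [exact Hab|]. eapply Rle_trans; [apply Rmax_l|apply Rmax_r].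
    + intros b Hb. destruct (Hyx_near b Hb) as [a [Ha Hba]]. exists a. split; auto.
      eapply Rle_trans; [exact Hba|]. eapply Rle_trans; [apply Rmax_r|apply Rmax_r].
  - simpl. unfold Rmax. repeat destruct Rle_dec; lra.
Qed.
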